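(* Let $\mathcal{L}$ be a finite-dimensional Lie algebra over a field $F$ such that $d(\mathcal{L}) = \dim_F(\mathcal{L})$. Then either $\mathcal{L}$ is abelian, or $\mathcal{L} = Fx \oplus \mathcal{A}$ for some $x \in \mathcal{L}$, where $\mathcal{A}$ is an abelian ideal of codimension $1$ in $\mathcal{L}$ and $\mathrm{ad}(x)|_{\mathcal{A}} = \mathrm{id}_{\mathcal{A}}$ (in particular $\mathcal{L}$ is metabelian).
   Context: $d(\mathcal{L})$ denotes the minimal number of generators of $\mathcal{L}$ as a Lie algebra. *)

From HB Require Import structures.
From mathcomp Require Import all_boot all_order all_algebra.
Set Implicit Arguments. Unset Strict Implicit. Unset Printing Implicit Defensive.
Import GRing.Theory.
Local Open Scope ring_scope.

Record lie_algebra (F : fieldType) (L : vectType F) := LieAlgebra {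
  lie_br : L -> L -> L;
  lie_linl : forall (a : F) (u v w : L),
      lie_br (a *: u + v) w = a *: lie_br u w + lie_br v w;
  lie_linr : forall (a : F) (u v w : L),
      lie_br w (a *: u + v) = a *: lie_br w u + lie_br w v;
  lie_alt : forall x : L, lie_br x x = 0;
  lie_jacobi : forall x y z : L,
      lie_br x (lie_br y z) + lie_br y (lie_br z x) + lie_br z (lie_br x y) = 0
}.

Section LieDefs.
Variables (F : fieldType) (L : vectType F) (g : lie_algebra L).
Local Notation "[[ x , y ]]" := (lie_br g x y).

Definition lie_subalg (U : {vspace L}) : Prop :=
  forall u v, u \in U -> v \in U -> [[u, v]] \in U.

Definition lie_generates (S : seq L) : Prop :=
  forall U : {vspace L}, lie_subalg U -> {subset S <= U} -> U = fullv.

Definition is_lie_gen_number (n : nat) : Prop :=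
  (exists S : seq L, size S = n /\ lie_generates S) /\
  (forall S : seq L, lie_generates S -> (n <= size S)%N).

Definition lie_abelian : Prop := forall x y : L, [[x, y]] = 0.

Definition lie_ideal (A : {vspace L}) : Prop :=
  forall y a, a \in A -> [[y, a]] \in A.

Definition lie_abelian_sub (A : {vspace L}) : Prop :=
  forall a b, a \in A -> b \in A -> [[a, b]] = 0.

End LieDefs.

From HB Require Import structures.
From mathcomp Require Import all_boot all_order all_algebra zify.
From Stdlib Require Import Classical.
Import GRing.Theory.
Local Open Scope ring_scope.

(* If d(L) = dim L, then [x, y] lies in the span of x and y for all x, y:
   otherwise x, y and a basis of a complement of span(x, y, [x, y]) would
   generate L with dim L - 1 elements.  If L is not abelian, this yields x and
   w <> 0 with [x, w] = w, and comparing coefficients in [x, y] and [x, y + w]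
   shows [x, y] - y \in F x for every y.  Hence the 1-eigenspace A of ad x is a
   complement of F x, and A is abelian: for a, b in A the Jacobi identity gives
   [x, [a, b]] = 2 [a, b], whereas [a, b] \in span(a, b) is fixed by ad x. *)

Set Implicit Arguments.
Unset Strict Implicit.
Unset Printing Implicit Defensive.

Section LieBracket.
Variables (F : fieldType) (L : vectType F) (g : lie_algebra L).
Local Notation "[[ x , y ]]" := (lie_br g x y).

Lemma lie_br_linear x : linear (lie_br g x).
Proof. by move=> a u v; rewrite lie_linr. Qed.

HB.instance Definition _ x :=
  GRing.isLinear.Build F L L *:%R (lie_br g x) (lie_br_linear x).

Definition ad x : 'End(L) := linfun (lie_br g x).

Definition lie_br_in_span := forall x y, [[x, y]] \in (<[x]> + <[y]>)%VS.

Lemma lie_brDl u v w : [[u + v, w]] = [[u, w]] + [[v, w]].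
Proof. by have := lie_linl g 1 u v w; rewrite !scale1r. Qed.

Lemma lie_brC u v : [[v, u]] = - [[u, v]].
Proof.
have := lie_alt g (u + v); rewrite lie_brDl !linearD /= !lie_alt add0r addr0.
by move/eqP; rewrite addr_eq0 => /eqP ->; rewrite opprK.
Qed.

Lemma lie_brZl a u w : [[a *: u, w]] = a *: [[u, w]].
Proof. by rewrite lie_brC linearZ -scalerN -lie_brC. Qed.

Lemma lie_br0l w : [[0, w]] = 0.
Proof. by rewrite lie_brC linear0 oppr0. Qed.

Lemma lie_br_derivation x a b :
  [[x, [[a, b]]]] = [[ [[x, a]], b]] + [[a, [[x, b]]]].
Proof.
have := lie_jacobi g x a b.
rewrite (lie_brC x b) (linearN (lie_br g a)) (lie_brC [[x, a]] b).
by rewrite -addrA -opprD => /subr0_eq ->; rewrite addrC.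
Qed.

Lemma mem_eigenspace_ad1 x a :
  (a \in passmx.leigenspace (ad x) 1) = ([[x, a]] == a).
Proof. by rewrite memv_ker !lfun_simp /= scale1r subr_eq0. Qed.

End LieBracket.

Lemma scale_notin_vspace_inj (F : fieldType) (L : vectType F)
    (U : {vspace L}) (u1 u2 v : L) (b1 b2 : F) :
  v \notin U -> u1 \in U -> u2 \in U -> u1 + b1 *: v = u2 + b2 *: v -> b1 = b2.
Proof.
move=> vU u1U u2U e; apply/eqP; rewrite -subr_eq0; apply: contraR vU => b12.
have : (b1 - b2) *: v \in U.
  by rewrite scalerBl -(addKr u1 (b1 *: v)) e addrA addrK rpredD ?rpredN.
by rewrite rpredZeq (negPf b12).
Qed.

Section Generation.
Variables (F : fieldType) (L : vectType F) (g : lie_algebra L).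
Local Notation "[[ x , y ]]" := (lie_br g x y).

Lemma lie_generates_adjoin_br (S : seq L) x y :
  x \in S -> y \in S -> (<[ [[x, y]] ]> + <<S>>)%VS = fullv -> lie_generates g S.
Proof.
move=> xS yS full V subV SV; apply/eqP; rewrite eqEsubv subvf -full subv_add.
have /span_subvP SsubV := SV.
by rewrite SsubV andbT -memvE; apply: subV; apply: SV.
Qed.

Lemma lie_br_in_span_of_dim_gens :
  is_lie_gen_number g (\dim {:L}) -> lie_br_in_span g.
Proof.
move=> [_ minS] x y; apply/negPn/negP => zxy.
have y0 : y != 0 by apply: contraNneq zxy => ->; rewrite linear0 mem0v.
have xy : x \notin <[y]>%VS.
  by apply: contra zxy => /vlineP [k ->]; rewrite lie_brZl lie_alt scaler0 mem0v.
pose W := <<[:: [[x, y]]; x; y]>>%VS.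
have dimW : \dim W = 3%N.
  apply/eqP; change (free [:: [[x, y]]; x; y]).
  rewrite free_cons !span_cons span_nil addv0 zxy free_cons.
  by rewrite span_seq1 xy seq1_free y0.
pose S := x :: y :: (vbasis W^C : seq L).
have genS : lie_generates g S.
  apply: (@lie_generates_adjoin_br _ x y); rewrite ?inE ?eqxx ?orbT //.
  apply/eqP; rewrite eqEsubv subvf /= -(addv_complf W) subv_add; apply/andP; split.
    rewrite /W /S !span_cons span_nil addv0.
    by do 2!apply: addvS => //; apply: addvSl.
  by rewrite /S !span_cons (span_basis (vbasisP _)) !addvA addvSr.
have := minS S genS; rewrite /S /= size_tuple dimv_compl dimW.
have : (3 <= \dim {:L})%N by rewrite -dimW dimvS ?subvf.
lia.
Qed.

End Generation.

Section SpannedBrackets.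
Variables (F : fieldType) (L : vectType F) (g : lie_algebra L).
Local Notation "[[ x , y ]]" := (lie_br g x y).
Hypothesis br_span : lie_br_in_span g.

Lemma lie_br_coefs x y : exists a b, [[x, y]] = a *: x + b *: y.
Proof.
have /memv_addP [_ /vlineP [a ->] [_ /vlineP [b ->] ->] ] := br_span x y.
by exists a, b.
Qed.

Lemma exists_ad_fixed_vector :
  ~ lie_abelian g -> exists x w, w != 0 /\ [[x, w]] = w.
Proof.
move=> /not_all_ex_not [u /not_all_ex_not [v /eqP uv0] ].
have [p [q uv] ] := lie_br_coefs u v.
have adu : [[u, [[u, v]]]] = q *: [[u, v]].
  by rewrite {1}uv linearD !linearZ /= lie_alt scaler0 add0r.
have adv : [[v, [[u, v]]]] = - p *: [[u, v]].
  rewrite {1}uv linearD !linearZ /= lie_alt scaler0 addr0 (lie_brC g u v).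
  by rewrite scalerN scaleNr.
have [q0 | q0] := eqVneq q 0.
  have p0 : - p != 0.
    by rewrite oppr_eq0; apply: contraNneq uv0 => p0; rewrite uv p0 q0 !scale0r addr0.
  by exists ((- p)^-1 *: v), [[u, v]]; rewrite lie_brZl adv scalerA mulVf ?scale1r.
by exists (q^-1 *: u), [[u, v]]; rewrite lie_brZl adu scalerA mulVf ?scale1r.
Qed.

Section AdFixedVector.
Variables (x w : L).
Hypotheses (w0 : w != 0) (adxw : [[x, w]] = w).

Let w_notin_line : w \notin <[x]>%VS.
Proof.
by apply: contra w0 => /vlineP [k wk]; rewrite -adxw wk linearZ /= lie_alt scaler0.
Qed.

Lemma ad_fixed_coef1 y a b :
  y \notin <[x]>%VS -> [[x, y]] = a *: x + b *: y -> b = 1.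
Proof.
move=> yx xy; have xline c : c *: x \in <[x]>%VS by rewrite memvZ ?memv_line.
have [wxy | wxy] := boolP (w \in (<[x]> + <[y]>)%VS).
  have /memv_addP [_ /vlineP [p ->] [_ /vlineP [q ->] wpq] ] := wxy.
  have q0 : q != 0.
    by apply: contraNneq w_notin_line => q0; rewrite wpq q0 scale0r addr0 xline.
  have adw : [[x, w]] = q *: [[x, y]].
    by rewrite wpq linearD !linearZ /= lie_alt scaler0 add0r.
  apply: (mulfI q0); rewrite mulr1.
  apply: (scale_notin_vspace_inj yx (xline (q * a)) (xline p)).
  by rewrite -!scalerA -scalerDr -xy -adw adxw -wpq.
have [c [d xyw] ] := lie_br_coefs x (y + w).
have xy_span e f : e *: x + f *: y \in (<[x]> + <[y]>)%VS.
  by rewrite memv_add ?memvZ ?memv_line.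
have xyw' : [[x, y + w]] = a *: x + b *: y + w by rewrite linearD /= adxw xy.
have d1 : 1 = d.
  apply: (scale_notin_vspace_inj wxy (xy_span a b) (xy_span c d)).
  by rewrite scale1r -xyw' xyw scalerDr addrA.
apply: (scale_notin_vspace_inj yx (xline a) (xline c)).
by apply: (@addIr _ w); rewrite -xyw' xyw -d1 !scale1r addrA.
Qed.

Lemma ad_sub_id_in_line y : [[x, y]] - y \in <[x]>%VS.
Proof.
have [/vlineP [k ->] | yx] := boolP (y \in <[x]>%VS).
  by rewrite linearZ /= lie_alt scaler0 sub0r memvN memvZ ?memv_line.
have [a [b xy] ] := lie_br_coefs x y.
by rewrite xy (ad_fixed_coef1 yx xy) scale1r addrK memvZ ?memv_line.
Qed.

End AdFixedVector.
End SpannedBrackets.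

Section AdEigenspace.
Variables (F : fieldType) (L : vectType F) (g : lie_algebra L) (x : L).
Local Notation "[[ x , y ]]" := (lie_br g x y).
Local Notation E1 := (passmx.leigenspace (ad g x) 1).
Hypothesis br_span : lie_br_in_span g.

Lemma ad_eig1_abelian : lie_abelian_sub g E1.
Proof.
move=> a b; rewrite !mem_eigenspace_ad1 => /eqP xa /eqP xb.
have xab : [[x, [[a, b]]]] = [[a, b]].
  have /memv_addP [_ /vlineP [p ->] [_ /vlineP [q ->] ->] ] := br_span a b.
  by rewrite linearD !linearZ /= xa xb.
have := lie_br_derivation g x a b; rewrite xab xa xb.
by move=> /esym/eqP; rewrite -subr_eq0 addrK => /eqP.
Qed.

Lemma line_ad_eig1_cap0 : (<[x]> :&: E1 = 0)%VS.
Proof.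
apply/eqP; rewrite -subv0; apply/subvP => _ /memv_capP [/vlineP [k ->] ].
by rewrite mem_eigenspace_ad1 linearZ /= lie_alt scaler0 memv0 eq_sym.
Qed.

Hypothesis adx : forall y, [[x, y]] - y \in <[x]>%VS.

Lemma ad_eig1_decomp y : exists k, y + k *: x \in E1.
Proof.
have /vlineP [k xy] := adx y; exists k.
by rewrite mem_eigenspace_ad1 linearD linearZ /= lie_alt scaler0 addr0 -xy addrC subrK.
Qed.

Lemma line_ad_eig1_full : (<[x]> + E1)%VS = fullv.
Proof.
apply/eqP; rewrite eqEsubv subvf; apply/subvP => y _.
have [k yk] := ad_eig1_decomp y.
by rewrite -[y](addrK (k *: x)) addrC memv_add ?memvN ?memvZ ?memv_line.
Qed.

Lemma ad_eig1_ideal : lie_ideal g E1.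
Proof.
move=> y a aE; have [k yk] := ad_eig1_decomp y.
have /eqP xa : [[x, a]] == a by rewrite -mem_eigenspace_ad1.
rewrite -[y](addrK (k *: x)) lie_brDl -scaleNr lie_brZl xa.
by rewrite (ad_eig1_abelian yk aE) add0r memvZ.
Qed.

End AdEigenspace.

Theorem lemma2p2 (F : fieldType) (L : vectType F) (g : lie_algebra L) :
  is_lie_gen_number g (\dim (fullv : {vspace L})) ->
  lie_abelian g \/
  exists (x : L) (A : {vspace L}),
    [/\ (<[x]> + A)%VS = fullv /\ directv (<[x]> + A),
        lie_ideal g A, lie_abelian_sub g A,
        (\dim A).+1 = \dim (fullv : {vspace L})
      & forall a, a \in A -> lie_br g x a = a].
Proof.
move=> gens; have br_span := lie_br_in_span_of_dim_gens gens.
have [|nonab] := classic (lie_abelian g); [by left | right].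
have [x [w [w0 adxw] ] ] := exists_ad_fixed_vector br_span nonab.
have adx := ad_sub_id_in_line br_span w0 adxw.
have x0 : x != 0 by apply: contraNneq w0 => x0; rewrite -adxw x0 lie_br0l.
exists x, (passmx.leigenspace (ad g x) 1); split.
- by split; [exact: line_ad_eig1_full | apply/directv_addP/line_ad_eig1_cap0].
- exact: ad_eig1_ideal.
- exact: ad_eig1_abelian.
- by rewrite -(line_ad_eig1_full adx) dimv_disjoint_sum ?line_ad_eig1_cap0 ?dim_vline ?x0.
- by move=> a; rewrite mem_eigenspace_ad1 => /eqP.
Qed.
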